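(* Let $\Phi:\ell^\infty(\mathbb Z)\to\ell^\infty(\mathbb Z)$ be a contractive, idempotent linear map commuting with the backward shift $B$. If $\lambda_1,\lambda_2,\lambda_3\in\sigma(\Phi)$, then $\lambda_1\overline{\lambda_2}\lambda_3\in\sigma(\Phi)$. For any $\lambda\in\sigma(\Phi)$, the set $\overline{\lambda}\cdot\sigma(\Phi)=\{\overline\lambda\mu:\mu\in\sigma(\Phi)\}$ is a subgroup of $\mathbb T$. If in addition $\Phi$ is unital, then $\sigma(\Phi)$ is a subgroup of $\mathbb T$.
   Context: $(Bv)_n=v_{n+1}$. For $\lambda\in\mathbb T$ let $x_\lambda=(\lambda^n)_{n\in\mathbb Z}$; a linear map $\Phi$ commuting with $B$ satisfies $\Phi(x_\lambda)=c_\lambda x_\lambda$ for some scalar $c_\lambda$, and $\sigma(\Phi)=\{\lambda\in\mathbb T:c_\lambda\neq0\}$. *)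

From HB Require Import structures.
From mathcomp Require Import all_boot all_order all_algebra.
From mathcomp Require Import complex reals.
Set Implicit Arguments. Unset Strict Implicit. Unset Printing Implicit Defensive.
Import Order.TTheory GRing.Theory Num.Theory.
Local Open Scope ring_scope.
Local Open Scope complex_scope.

Section Defs.
Variable R : realType.
Notation C := R[i].

Definition seqZ := int -> C.
Definition bounded (v : seqZ) : Prop := exists M : C, forall n, `|v n| <= M.

Definition bshift (v : seqZ) : seqZ := fun n => v (n + 1)%R.

(* A map Phi on l^oo(Z) is represented by Phi : seqZ -> seqZ; only its values
   on bounded sequences matter, all hypotheses are restricted to l^oo(Z). *)
Definition maps_linf (Phi : seqZ -> seqZ) : Prop :=
  forall v, bounded v -> bounded (Phi v).
Definition linear_linf (Phi : seqZ -> seqZ) : Prop :=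
  forall (a : C) (u v : seqZ), bounded u -> bounded v ->
    Phi (fun n => a * u n + v n) = (fun n => a * Phi u n + Phi v n).
Definition contractive_linf (Phi : seqZ -> seqZ) : Prop :=
  forall (v : seqZ) (M : C), bounded v -> (forall n, `|v n| <= M) ->
    forall n, `|Phi v n| <= M.
Definition idempotent_linf (Phi : seqZ -> seqZ) : Prop :=
  forall v, bounded v -> Phi (Phi v) = Phi v.
Definition commutes_shift (Phi : seqZ -> seqZ) : Prop :=
  forall v, bounded v -> Phi (bshift v) = bshift (Phi v).
Definition unital (Phi : seqZ -> seqZ) : Prop :=
  Phi (fun _ => 1) = (fun _ => 1).

Definition xseq (l : C) : seqZ := fun n => l ^ n.
(* c_lambda: Phi x_lambda = c_lambda x_lambda, so c_lambda = (Phi x_lambda)_0 *)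
Definition coef (Phi : seqZ -> seqZ) (l : C) : C := Phi (xseq l) 0.
Definition spec (Phi : seqZ -> seqZ) (l : C) : Prop :=
  `|l| = 1 /\ coef Phi l != 0.

Definition subgroupT (S : C -> Prop) : Prop :=
  [/\ forall z, S z -> `|z| = 1, S 1,
      forall a b, S a -> S b -> S (a * b) & forall a, S a -> S a^-1].
End Defs.

From HB Require Import structures.
From mathcomp Require Import all_boot all_order all_algebra.
From mathcomp Require Import complex reals.
From mathcomp Require Import ring.
From Stdlib Require Import FunctionalExtensionality.
Import Order.TTheory GRing.Theory Num.Theory.
Local Open Scope ring_scope.

Set Implicit Arguments.
Unset Strict Implicit.
Unset Printing Implicit Defensive.

(* If l lies in sigma(Phi), idempotence forces c_l = 1, so Phi fixes x_l.
   Take l1, l2, l3 in sigma(Phi) and suppose mu = l1 conj(l2) l3 is not, so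
   that Phi kills x_mu.  The sequence x_l1 + x_l2 + x_l3 - x_mu has terms
   a + b + c - a conj(b) c = (a + b) + c conj(b) (b - a) with a, b, c on the
   unit circle, of modulus at most |a + b| + |a - b| <= 2 sqrt 2 by the
   parallelogram law, while Phi maps it to x_l1 + x_l2 + x_l3, whose value at
   0 is 3: this contradicts contractivity.  A subset of the circle closed under
   (a, b, c) |-> a conj(b) c is a coset of a subgroup, which gives the two
   group statements. *)

Lemma exprz_recurrence (F : fieldType) (u : int -> F) (l : F) : l != 0 ->
  (forall n, u (n + 1) = l * u n) -> forall n, u n = u 0 * l ^ n.
Proof.
move=> l0 rec; have lU : l \is a GRing.unit by rewrite unitfE.
elim/int_ind => [|n IH|n IH]; first by rewrite expr0z mulr1.
- by rewrite -[n.+1]addn1 PoszD rec IH exprzDr // expr1z; ring.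
- have := rec (- n.+1%:Z); rewrite -[n.+1]addn1 PoszD opprD addrNK IH.
  by move=> /esym/(canRL (mulKf l0)) ->; rewrite exprzDr // exprN1; ring.
Qed.

Section UnitCircle.
Variable C : numClosedFieldType.
Implicit Types a b c z : C.

Lemma unit_circle_neq0 z : `|z| = 1 -> z != 0.
Proof. by move=> z1; rewrite -normr_eq0 z1 oner_neq0. Qed.

Lemma unit_circle_invE z : `|z| = 1 -> z^-1 = z^*.
Proof. by move=> z1; rewrite invC_norm z1 expr1n invr1 mul1r. Qed.

Lemma normr_exprz_unit_circle z (n : int) : `|z| = 1 -> `|z ^ n| = 1.
Proof. by move=> z1; case: n => k; rewrite ?normfV normrX z1 expr1n ?invr1. Qed.

Lemma parallelogram_law a b :
  `|a + b| ^+ 2 + `|a - b| ^+ 2 = 2 * (`|a| ^+ 2 + `|b| ^+ 2).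
Proof. by rewrite !normCK rmorphD rmorphB; ring. Qed.

Lemma normD_add_normB_le a b : `|a| = 1 -> `|b| = 1 ->
  `|a + b| + `|a - b| <= sqrtC 8.
Proof.
move=> a1 b1.
have sum_nneg : `|a + b| + `|a - b| \is Num.nneg by rewrite nnegrE addr_ge0.
have sqrt8_nneg : sqrtC (8 : C) \is Num.nneg by rewrite nnegrE sqrtC_ge0 ler0n.
rewrite -(@ler_pXn2r _ 2 isT _ _ sum_nneg sqrt8_nneg) sqrtCK.
have -> : (`|a + b| + `|a - b|) ^+ 2 =
    2 * (`|a + b| ^+ 2 + `|a - b| ^+ 2) - (`|a + b| - `|a - b|) ^+ 2 by ring.
rewrite parallelogram_law a1 b1 expr1n.
have -> : 2 * (2 * (1 + 1)) = 8 :> C by ring.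
by rewrite gerBl -realEsqr realB ?normr_real.
Qed.

Lemma norm_add3_subMJM_le a b c : `|a| = 1 -> `|b| = 1 -> `|c| = 1 ->
  `|a + b + c - a * b^* * c| <= sqrtC 8.
Proof.
move=> a1 b1 c1; have b0 : b != 0 by exact: unit_circle_neq0.
have -> : a + b + c - a * b^* * c = (a + b) + c / b * (b - a).
  by rewrite -unit_circle_invE //; field.
apply: le_trans (ler_normD _ _) _.
by rewrite !normrM normfV b1 c1 invr1 !mul1r distrC normD_add_normB_le.
Qed.

Lemma sqrtC8_lt3 : sqrtC 8 < 3 :> C.
Proof.
have sqrt8_nneg : sqrtC (8 : C) \is Num.nneg by rewrite nnegrE sqrtC_ge0 ler0n.
have three_nneg : (3 : C) \is Num.nneg by rewrite nnegrE ler0n.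
rewrite -(@ltr_pXn2r _ 2 isT _ _ sqrt8_nneg three_nneg).
by rewrite sqrtCK -natrX ltr_nat.
Qed.
End UnitCircle.

Section BoundedSequences.
Variable R : realType.
Implicit Types (u v : seqZ R) (l : R[i]).

Lemma bounded_cst (a : R[i]) : bounded (fun _ : int => a).
Proof. by exists `|a|. Qed.

Lemma boundedD u v : bounded u -> bounded v -> bounded (u \+ v).
Proof.
move=> [M uM] [N vN]; exists (M + N) => n.
exact: le_trans (ler_normD _ _) (lerD (uM n) (vN n)).
Qed.

Lemma boundedB u v : bounded u -> bounded v -> bounded (u \- v).
Proof.
move=> [M uM] [N vN]; exists (M + N) => n.
by apply: le_trans (ler_normB _ _) (lerD (uM n) (vN n)).
Qed.

Lemma bounded_xseq l : `|l| = 1 -> bounded (xseq l).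
Proof. by move=> l1; exists 1 => n; rewrite normr_exprz_unit_circle. Qed.

End BoundedSequences.

Section ShiftInvariantProjection.
Variable R : realType.
Variable Phi : seqZ R -> seqZ R.
Implicit Types (u v : seqZ R) (l : R[i]).

Lemma unital_spec1 : unital Phi -> spec Phi 1.
Proof.
move=> Phi1; split; rewrite ?normr1 // /coef.
have -> : xseq (1 : R[i]) = fun _ => 1.
  by apply: functional_extensionality => n; rewrite /xseq exp1rz.
by rewrite Phi1 oner_neq0.
Qed.

Hypothesis Phi_linear : linear_linf Phi.

Lemma PhiD u v : bounded u -> bounded v -> Phi (u \+ v) = Phi u \+ Phi v.
Proof.
move=> bu bv; have := Phi_linear 1 bu bv.
have -> : (fun n => 1 * u n + v n) = u \+ v.
  by apply: functional_extensionality => n; rewrite /= mul1r.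
by move=> ->; apply: functional_extensionality => n; rewrite /= mul1r.
Qed.

Lemma PhiB u v : bounded u -> bounded v -> Phi (u \- v) = Phi u \- Phi v.
Proof.
move=> bu bv; have := Phi_linear (-1) bv bu.
have -> : (fun n => -1 * v n + u n) = u \- v.
  by apply: functional_extensionality => n; rewrite /= mulN1r addrC.
by move=> ->; apply: functional_extensionality => n; rewrite /= mulN1r addrC.
Qed.

Lemma Phi0 : Phi (fun _ => 0) = fun _ => 0.
Proof.
have := PhiB (bounded_cst 0) (bounded_cst 0).
have -> : (fun _ : int => 0 : R[i]) \- (fun _ => 0) = (fun _ => 0).
  by apply: functional_extensionality => n; rewrite /= subrr.
by move=> ->; apply: functional_extensionality => n; rewrite /= subrr.
Qed.

Lemma PhiZ (a : R[i]) u :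
  bounded u -> Phi (fun n => a * u n) = fun n => a * Phi u n.
Proof.
move=> bu; have := Phi_linear a bu (bounded_cst 0); rewrite Phi0.
have -> : (fun n => a * u n + 0) = fun n => a * u n.
  by apply: functional_extensionality => n; rewrite addr0.
by move=> ->; apply: functional_extensionality => n; rewrite addr0.
Qed.

Hypothesis Phi_shift : commutes_shift Phi.

Lemma Phi_xseq l : `|l| = 1 -> Phi (xseq l) = fun n => coef Phi l * xseq l n.
Proof.
move=> l1; have bl := bounded_xseq l1.
have l0 : l != 0 by exact: unit_circle_neq0.
have shiftE : bshift (xseq l) = fun n => l * xseq l n.
  apply: functional_extensionality => n.
  by rewrite /bshift /xseq exprzDr ?unitfE // expr1z mulrC.
apply: functional_extensionality; apply: (exprz_recurrence l0) => n.
by have := congr1 (fun f => f n) (Phi_shift bl); rewrite shiftE PhiZ.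
Qed.

Hypothesis Phi_idem : idempotent_linf Phi.

Lemma coef_spec l : spec Phi l -> coef Phi l = 1.
Proof.
move=> [l1 c0]; have := congr1 (fun f => f 0) (Phi_idem (bounded_xseq l1)).
rewrite {1}(Phi_xseq l1) (PhiZ _ (bounded_xseq l1)) /= -/(coef Phi l).
by move=> cc; apply: (mulfI c0); rewrite mulr1.
Qed.

Lemma Phi_xseq_spec l : spec Phi l -> Phi (xseq l) = xseq l.
Proof.
move=> sl; rewrite (Phi_xseq sl.1) coef_spec //.
by apply: functional_extensionality => n; rewrite mul1r.
Qed.

Hypothesis Phi_contr : contractive_linf Phi.

Lemma spec_mulJ l1 l2 l3 :
  spec Phi l1 -> spec Phi l2 -> spec Phi l3 -> spec Phi (l1 * l2^* * l3).
Proof.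
move=> s1 s2 s3; have [[n1 _] [n2 _] [n3 _]] := And3 s1 s2 s3.
set mu := l1 * l2^* * l3.
have mu1 : `|mu| = 1 by rewrite !normrM norm_conjC n1 n2 n3 !mul1r.
split=> //; apply/eqP => c0.
have [b1 b2 b3] := And3 (bounded_xseq n1) (bounded_xseq n2) (bounded_xseq n3).
have bmu := bounded_xseq mu1.
pose g := xseq l1 \+ xseq l2 \+ xseq l3 \- xseq mu.
have b12 := boundedD b1 b2; have b123 := boundedD b12 b3.
have bg : bounded g := boundedB b123 bmu.
have g_le n : `|g n| <= sqrtC 8.
  rewrite /g /= /xseq /mu !expfzMl -(unit_circle_invE n2) -expfV.
  rewrite unit_circle_invE ?normr_exprz_unit_circle //.
  by apply: norm_add3_subMJM_le; exact: normr_exprz_unit_circle.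
have := Phi_contr bg g_le 0.
rewrite /g PhiB // !PhiD // (Phi_xseq mu1) c0 !Phi_xseq_spec // /= /xseq.
rewrite !expr0z mul0r subr0.
have -> : 1 + 1 + 1 = 3 :> R[i] by ring.
by rewrite normr_nat => /(lt_le_trans (sqrtC8_lt3 _)); rewrite ltxx.
Qed.

End ShiftInvariantProjection.

Section CircleHeap.
Variable R : realType.
Variable S : R[i] -> Prop.
Hypothesis S_circle : forall z, S z -> `|z| = 1.
Hypothesis S_heap : forall a b c, S a -> S b -> S c -> S (a * b^* * c).

Lemma subgroupT_conj_translate l :
  S l -> subgroupT (fun z => exists2 mu, S mu & z = l^* * mu).
Proof.
move=> Sl; have l1 := S_circle Sl.
have conjl_l : l^* * l = 1 by rewrite mulrC -normCK l1 expr1n.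
split.
- by move=> _ [mu Smu ->]; rewrite normrM norm_conjC l1 (S_circle Smu) mul1r.
- by exists l.
- move=> _ _ [m1 Sm1 ->] [m2 Sm2 ->]; exists (m1 * l^* * m2); first exact: S_heap.
  by rewrite !mulrA.
- move=> _ [m Sm ->]; exists (l * m^* * l); first exact: S_heap.
  rewrite invfM !unit_circle_invE ?norm_conjC ?S_circle // conjCK.
  by rewrite !mulrA conjl_l mul1r mulrC.
Qed.

Lemma subgroupT_heap1 : S 1 -> subgroupT S.
Proof.
move=> S1; split=> // [a b Sa Sb | a Sa].
- by have := S_heap Sa S1 Sb; rewrite conjC1 mulr1.
- by have := S_heap S1 Sa S1; rewrite mulr1 mul1r unit_circle_invE ?S_circle.
Qed.

End CircleHeap.

Theorem theorem2p9 (R : realType) (Phi : seqZ R -> seqZ R) :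
  maps_linf Phi -> linear_linf Phi -> contractive_linf Phi ->
  idempotent_linf Phi -> commutes_shift Phi ->
  [/\ (forall l1 l2 l3 : R[i], spec Phi l1 -> spec Phi l2 -> spec Phi l3 ->
         spec Phi (l1 * l2^* * l3)),
      (forall l : R[i], spec Phi l ->
         subgroupT (fun z : R[i] => exists2 mu, spec Phi mu & z = l^* * mu))
    & (unital Phi -> subgroupT (spec Phi))].
Proof.
(* [maps_linf] is unused: it follows from contractivity. *)
move=> _ Phi_linear Phi_contr Phi_idem Phi_shift.
have spec_heap := spec_mulJ Phi_linear Phi_shift Phi_idem Phi_contr.
have spec_circle l : spec Phi l -> `|l| = 1 by case.
split=> // [l | /unital_spec1].
- exact: subgroupT_conj_translate.
- exact: subgroupT_heap1.
Qed.
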